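(* Let $U\subset G$ be an arbitrary unit neighborhood and let $\varepsilon>0$. Then there is a relatively separated and $U$-dense set $\Lambda\subset G$ with uniformity $\mathscr{U}(\Lambda;U)<1+\varepsilon$.
   Context: $G$ is a $\sigma$-compact locally compact group with left Haar measure $\mu_G$; $Q$ a fixed symmetric open relatively compact neighborhood of $e$. $\Lambda$ is relatively separated if $\sup_{x\in G}\#(\Lambda\cap xQ)<\infty$ and $U$-dense if $G=\bigcup_{\lambda\in\Lambda}\lambda U$. A disjoint cover associated to $\Lambda$ and $U$ is a family $(U_\lambda)_{\lambda\in\Lambda}$ of Borel sets with $U_\lambda\subset\lambda U$ whose disjoint union is $G$. The $U$-uniformity is $\mathscr{U}(\Lambda;U)=\inf\{\sup_{\lambda,\lambda'\in\Lambda}\mu_G(U_\lambda)/\mu_G(U_{\lambda'})\}\in[1,\infty]$, the infimum taken over all disjoint covers associated to $\Lambda$ and $U$. *)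

From HB Require Import structures.
From mathcomp Require Import all_boot all_order all_algebra.
From mathcomp Require Import all_classical all_reals.
From mathcomp Require Import all_analysis.
Set Implicit Arguments. Unset Strict Implicit. Unset Printing Implicit Defensive.
Import Order.TTheory GRing.Theory Num.Theory.
Local Open Scope classical_set_scope.
Local Open Scope ring_scope.

Section LCGroups.
Variables (G : ptopologicalType) (mul : G -> G -> G) (inv : G -> G) (e : G).

Local Notation borelG := (g_sigma_algebraType (@open G)).

Definition lmul (x : G) (A : set G) : set G := [set mul x a | a in A].

Definition is_topgroup : Prop :=
  [/\ associative mul, left_id e mul, left_inverse e inv mul,
      continuous (fun p : G * G => mul p.1 p.2) & continuous inv].

Definition lc_sigma_compact : Prop :=
  [/\ hausdorff_space G,
      (forall x : G, exists K : set G, compact K /\ nbhs x K) &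
      exists K : nat -> set G, (forall n, compact (K n)) /\ \bigcup_n K n = setT].

Definition left_haar (R : realType)
    (mu : {measure set borelG -> \bar R}) : Prop :=
  [/\ (forall (x : G) (A : set borelG), measurable A -> mu (lmul x A) = mu A),
      (forall K : set G, compact K -> (mu K < +oo)%E),
      (forall A : set borelG, measurable A ->
          mu A = ereal_inf [set mu V | V in [set V : set G | open V /\ A `<=` V]]),
      (forall V : set G, open V ->
          mu V = ereal_sup [set mu K | K in [set K : set G | compact K /\ K `<=` V]])
    & exists A : set borelG, measurable A /\ (0 < mu A)%E].

Definition good_Q (Q : set G) : Prop :=
  [/\ open Q, Q e, (forall x, Q x -> Q (inv x)) & compact (closure Q)].

Definition rel_separated (Q Lambda : set G) : Prop :=
  exists N : nat, forall x : G, ((Lambda `&` lmul x Q) #<= `I_N)%card.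

Definition U_dense (Lambda U : set G) : Prop :=
  \bigcup_(l in Lambda) lmul l U = setT.

Definition disjoint_cover (Lambda U : set G) (F : G -> set G) : Prop :=
  [/\ (forall l, Lambda l -> measurable (F l : set borelG)),
      (forall l, Lambda l -> F l `<=` lmul l U),
      trivIset Lambda F &
      \bigcup_(l in Lambda) F l = setT].

(* quotient a/b in [0, +oo], with the convention a/a = 1 (relevant only for
   0/0 and +oo/+oo); otherwise a * b^-1 with 0^-1 = +oo, (+oo)^-1 = 0. *)
Definition eratio (R : realType) (a b : \bar R) : \bar R :=
  if a == b then 1%E else (a * b^-1)%E.

Definition uniformity (R : realType) (mu : {measure set borelG -> \bar R})
    (Lambda U : set G) : \bar R :=
  ereal_inf [set ereal_sup [set eratio (mu (F l)) (mu (F l')) |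
                            l in Lambda & l' in Lambda]
            | F in [set F | disjoint_cover Lambda U F]].

End LCGroups.

Notation borelG G := (g_sigma_algebraType (@open G)).

(* If [e] is an atom of the Haar measure, all singletons have the same positive
   mass and the partition of G into points has uniformity 1.  Otherwise open
   neighbourhoods of [e] can have arbitrarily small measure.  Take a maximal
   family L of points with pairwise disjoint translates [l V]; assigning every
   remaining point to the least [l] (for a well-order of G) with [x \in l W0]
   yields Borel cells between [l V] and [l W0].  Cutting each cell along a
   finite cover by translates of a tiny open set and regrouping consecutive
   bits splits it into pieces of almost equal measure [c], uniformly over all
   cells.  One point in each piece gives Lambda: pieces lie in translates of
   [U] (density), a compact set meets boundedly many of them (separation), and
   the ratio of the piece measures bounds the uniformity. *)

From HB Require Import structures.
From mathcomp Require Import all_boot all_order all_algebra finmap.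
From mathcomp Require Import all_classical all_reals all_analysis wochoice.
From mathcomp Require Import ring lra.
Import Order.TTheory GRing.Theory Num.Theory.
Local Open Scope classical_set_scope.
Local Open Scope ring_scope.
Set Implicit Arguments. Unset Strict Implicit. Unset Printing Implicit Defensive.

(** * Near-equal grouping of finite sums *)

Lemma exists_interval_index (R : realDomainType) (f : nat -> R) x n :
  f 0%N <= x -> x < f n -> exists2 j, (j < n)%N & f j <= x < f j.+1.
Proof.
move=> f0x; elim: n => [|n IHn] xfn; first by move: f0x; rewrite leNgt xfn.
have [xfn'|fnx] := ltP x (f n); last by exists n; rewrite ?fnx.
by have [j jn fj] := IHn xfn'; exists j => //; apply: ltnW.
Qed.

Lemma approx_subr (R : realDomainType) (a b x y d : R) :
  a <= x < a + d -> b <= y < b + d -> b - a - d < y - x < b - a + d.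
Proof. by move=> /andP[? ?] /andP[? ?]; apply/andP; split; lra. Qed.

Section PrefixSums.
Variables (R : realFieldType) (m : nat -> R) (d : R).
Hypotheses (m_ge0 : forall i, 0 <= m i) (m_lt : forall i, m i < d).

Definition prefix_sum n := \sum_(i < n) m i.

Definition sum_before n T := \sum_(i < n | prefix_sum i < T) m i.

Lemma prefix_sumS n : prefix_sum n.+1 = prefix_sum n + m n.
Proof. by rewrite /prefix_sum big_ord_recr. Qed.

Lemma prefix_sum_ge0 n : 0 <= prefix_sum n.
Proof. by apply: sumr_ge0 => i _. Qed.

Lemma prefix_sum_le i n : (i <= n)%N -> prefix_sum i <= prefix_sum n.
Proof.
move=> /subnK <-; elim: (n - i)%N => [|k IHk]; first by rewrite add0n.
by rewrite addSn prefix_sumS; apply: le_trans IHk _; rewrite lerDl.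
Qed.

Lemma sum_beforeS n T :
  sum_before n.+1 T = sum_before n T + (if prefix_sum n < T then m n else 0).
Proof. by rewrite /sum_before big_mkcond big_ord_recr /= -big_mkcond. Qed.

Lemma sum_before_total n T : prefix_sum n < T -> sum_before n T = prefix_sum n.
Proof.
move=> nT; apply: eq_bigl => i; apply: le_lt_trans nT.
by apply: prefix_sum_le; apply: ltnW.
Qed.

Lemma sum_before_bounds n T :
  0 <= T <= prefix_sum n -> T <= sum_before n T < T + d.
Proof.
elim: n => [|n IHn] /andP[T0 Tn].
  have -> : T = 0.
    by apply/le_anti; rewrite T0 andbT; move: Tn; rewrite /prefix_sum big_ord0.
  by rewrite /sum_before big_ord0 lexx add0r (le_lt_trans (m_ge0 0)).
rewrite sum_beforeS; case: ltP => [nT|Tn']; last by rewrite addr0 IHn ?T0.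
rewrite sum_before_total // -prefix_sumS Tn /=.
by rewrite prefix_sumS ltrD.
Qed.

Lemma sum_between n a b : a <= b ->
  \sum_(i < n | a <= prefix_sum i < b) m i = sum_before n b - sum_before n a.
Proof.
move=> ab; apply/eqP; rewrite eq_sym subr_eq /sum_before.
rewrite [X in X == _](bigID (fun i : 'I_n => a <= prefix_sum i)) /=.
apply/eqP; congr (_ + _); apply: eq_bigl => i; first by rewrite andbC.
rewrite -ltNge andbC; case: ltP => // ia; apply: lt_le_trans ia ab.
Qed.

Section Thresholds.
Variables (n k : nat).
Hypothesis k0 : (0 < k)%N.

Let t := prefix_sum n / k%:R.

Let k0R : 0 < k%:R :> R. Proof. by rewrite ltr0n. Qed.

Let t_ge0 : 0 <= t. Proof. by rewrite divr_ge0 ?prefix_sum_ge0 ?ler0n. Qed.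

Let prefix_sumE : prefix_sum n = k%:R * t.
Proof. by rewrite mulrC divfK ?gt_eqF. Qed.

(* The last threshold exceeds every prefix sum, so the last group takes all
   the terms beyond [(k - 1) t]. *)
Definition threshold j := if (j < k)%N then j%:R * t else prefix_sum n + 1.

Definition in_group j i := threshold j <= prefix_sum i < threshold j.+1.

Lemma mul_mean_le j : (j <= k)%N -> j%:R * t <= prefix_sum n.
Proof. by move=> jk; rewrite prefix_sumE ler_wpM2r ?ler_nat. Qed.

Lemma threshold_mono i j : (i <= j)%N -> threshold i <= threshold j.
Proof.
rewrite /threshold => ij; case: (ltnP j k) => jk.
  by rewrite (leq_ltn_trans ij jk) ler_wpM2r ?ler_nat.
case: ltnP => ik; last exact: lexx.
by apply: le_trans (mul_mean_le (ltnW ik)) _; rewrite lerDl.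
Qed.

Lemma in_group_uniq i j j' : in_group j i -> in_group j' i -> j = j'.
Proof.
wlog jj' : j j' / (j <= j')%N => [wlog_jj'|].
  by case/orP: (leq_total j j') => ? ? ?; [|apply/esym]; apply: wlog_jj'.
move=> /andP[_ ij] /andP[j'i _]; apply/eqP; rewrite eqn_leq jj' leqNgt /=.
apply/negP => /threshold_mono jj1.
by have := lt_le_trans ij (le_trans jj1 j'i); rewrite ltxx.
Qed.

Lemma in_group_exists i : (i <= n)%N -> exists2 j, (j < k)%N & in_group j i.
Proof.
move=> i_le_n; apply: exists_interval_index.
  by rewrite /threshold k0 mul0r prefix_sum_ge0.
rewrite /threshold ltnn; apply: le_lt_trans (prefix_sum_le i_le_n) _.
by rewrite ltrDl.
Qed.

(* Each boundary of a group misses its threshold by less than [d]. *)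
Lemma in_group_sum j : (j < k)%N ->
  t - d < \sum_(i < n | in_group j i) m i < t + d.
Proof.
move=> jk; rewrite sum_between ?threshold_mono // /threshold jk.
have hj : j%:R * t <= sum_before n (j%:R * t) < j%:R * t + d.
  by apply: sum_before_bounds; rewrite mulr_ge0 ?ler0n // mul_mean_le // ltnW.
have tE : j.+1%:R * t - j%:R * t = t.
  by rewrite -natr1 mulrDl mul1r addrAC subrr add0r.
rewrite -[in X in X - d]tE -[in X in _ < X + d]tE.
case: ltnP => [jk'|kj].
  apply: approx_subr hj _.
  by apply: sum_before_bounds; rewrite mulr_ge0 ?ler0n // mul_mean_le.
have kj1 : k = j.+1 by apply/eqP; rewrite eqn_leq kj jk.
rewrite sum_before_total ?ltrDl // prefix_sumE kj1; apply: approx_subr hj _.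
by rewrite lexx ltrDl (le_lt_trans (m_ge0 0)).
Qed.

End Thresholds.

Lemma near_equal_grouping n k : (0 < k)%N -> exists g : nat -> nat,
  (forall i, (g i < k)%N) /\ forall j, (j < k)%N ->
  prefix_sum n / k%:R - d < \sum_(i < n | g i == j) m i < prefix_sum n / k%:R + d.
Proof.
move=> k0.
have /choice[g gP] : forall i, exists j,
    (j < k)%N /\ ((i < n)%N -> in_group n k j i).
  move=> i; have [i_lt_n|] := ltnP i n; last by exists 0%N.
  by have [j jk ij] := in_group_exists k0 (ltnW i_lt_n); exists j.
exists g; split=> [i|j jk]; first by case: (gP i).
suff -> : \sum_(i < n | g i == j) m i = \sum_(i < n | in_group n k j i) m i.
  exact: in_group_sum.
apply: eq_bigl => i; have [_ /(_ (ltn_ord i)) gi] := gP i.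
by apply/eqP/idP => [<-|/(in_group_uniq k0 gi)].
Qed.

End PrefixSums.

Lemma exists_equipartition_ratio (R : realFieldType) (eps : R) : 0 < eps ->
  exists2 eta, 0 < eta < 1 &
  forall c, 0 < c -> ((1 - eta)^-1 + eta) * c / ((1 - eta) * c) < 1 + eps.
Proof.
move=> eps0; pose eta := Num.min eps 1 / 8.
have eta0 : 0 < eta by rewrite /eta divr_gt0 // lt_min eps0 ltr01.
have [eta_eps eta1] : 8 * eta <= eps /\ 8 * eta <= 1.
  by split; rewrite /eta mulrC divfK // ge_min lexx ?orbT.
exists eta => [|c c0]; first by rewrite eta0; lra.
have eta1' : 0 < 1 - eta by lra.
have -> : ((1 - eta)^-1 + eta) * c / ((1 - eta) * c) =
          (1 + eta * (1 - eta)) / (1 - eta) ^+ 2.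
  by field; rewrite !gt_eqF.
rewrite ltr_pdivrMr ?exprn_gt0 //; nra.
Qed.

(** * Counting and equipartition in measure spaces *)

Lemma card_le_fset_bound (T : choiceType) (S : set T) n :
  (forall X : {fset T}, [set` X] `<=` S -> (#|` X| <= n)%N) ->
  (S #<= `I_n)%card.
Proof.
move=> Sn; have Sfin : finite_set S.
  apply: contrapT => /(infinite_set_fset n.+1)[X XS].
  by rewrite ltnNge Sn.
have [X SX] := finite_fsetP.1 Sfin; subst S.
by rewrite (card_le_eql (introT card_eq_fsetP (erefl #|` X|))) card_le_II Sn.
Qed.

Section MeasureCount.
Context d (T : measurableType d) (R : realType).
Variable mu : {measure set T -> \bar R}.

Lemma card_le_measure (I : choiceType) (D : set I) (F : I -> set T)
    (A : set T) (b B : R) :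
  0 < b -> measurable A -> (mu A <= B%:E)%E -> trivIset D F ->
  (forall i, D i -> [/\ measurable (F i), (b%:E <= mu (F i))%E & F i `<=` A]) ->
  (D #<= `I_(Num.truncn (B / b)))%card.
Proof.
move=> b0 mA AB tF DF; apply: card_le_fset_bound => X XD.
have mF i : [set` X] i -> measurable (F i) by move=> /XD /DF[].
have : (mu (\bigcup_(i in [set` X]) F i) <= B%:E)%E.
  apply: le_trans AB; apply: le_measure; rewrite ?inE //.
    exact: fin_bigcup_measurable.
  by move=> x [i /XD /DF[_ _ FA] /FA].
rewrite measure_fin_bigcup //; last exact: sub_trivIset tF.
rewrite -fsbig_seq ?fset_uniq //.
have : (\sum_(i <- X) b%:E <= \sum_(i <- X) mu (F i))%E.
  by rewrite !big_seq; apply: lee_sum => i /XD /DF[].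
move=> /le_trans /[apply]; rewrite sumEFin big_const_seq count_predT.
rewrite iter_addr_0 lee_fin -mulr_natr -ler_pdivlMl // => Xb.
have B0 : 0 <= B by rewrite -lee_fin; apply: le_trans AB.
by rewrite truncn_ge_nat ?divr_ge0 ?(ltW b0) // [B / b]mulrC.
Qed.

End MeasureCount.

Lemma truncn_div_bounds (R : archiRealFieldType) (M a c : R) : 0 < c < a -> a <= M ->
  (0 < Num.truncn (M / c))%N /\
  c <= M / (Num.truncn (M / c))%:R < c * a / (a - c).
Proof.
move=> /andP[c0 ca] aM; set k := Num.truncn (M / c).
have Mc0 : 0 <= M / c by rewrite divr_ge0 //; lra.
have kle : k%:R <= M / c by rewrite truncn_le.
have kgt : M / c < k.+1%:R by apply: truncnS_gt.
rewrite ler_pdivlMr // in kle; rewrite ltr_pdivrMr // -natr1 in kgt.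
have k0 : (0 < k)%N by rewrite truncn_ge_nat // ler_pdivlMr // mul1r; lra.
have k0R : 0 < k%:R :> R by rewrite ltr0n.
split => //; rewrite ler_pdivlMr // mulrC kle /=.
by rewrite ltr_pdivrMr // mulrAC ltr_pdivlMr ?subr_gt0 //; nra.
Qed.

Lemma bigsetU_ordP (T : Type) n (P : pred 'I_n) (F : 'I_n -> set T) x :
  (\big[setU/set0]_(i < n | P i) F i) x <-> exists2 i : 'I_n, P i & F i x.
Proof. by rewrite -(bigcup_pred P F); split=> -[i Pi Fix]; exists i. Qed.

Section Equipartition.
Context d (T : measurableType d) (R : realType).
Variable mu : {measure set T -> \bar R}.

Lemma measure_equipartition (F : nat -> set T) n (a c r : R) :
  (forall i, measurable (F i)) -> trivIset setT F ->
  (forall i, (mu (F i) < r%:E)%E) -> 0 < c < a -> r <= c ->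
  (a%:E <= mu (\bigcup_(i < n) F i))%E ->
  exists P : set (set T), [/\ partition P id (\bigcup_(i < n) F i),
    forall S, P S -> measurable S &
    forall S, P S -> ((c - r)%:E < mu S < (c * a / (a - c) + r)%:E)%E].
Proof.
move=> mF tF Fr ca rc aM.
pose m i := fine (mu (F i)).
have muF i : mu (F i) = (m i)%:E.
  by rewrite fineK // ge0_fin_numE // (lt_le_trans (Fr i)) ?leey.
have m_ge0 i : 0 <= m i by rewrite -lee_fin -muF.
have m_lt i : m i < r by rewrite -lte_fin -muF.
have mu_sum (P : pred nat) :
    mu (\big[setU/set0]_(i < n | P i) F i) = (\sum_(i < n | P i) m i)%:E.
  rewrite measure_bigsetU_ord // -?sumEFin => [|i j _ _ Fij].
    by apply: eq_bigr => i _; apply: muF.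
  by apply: val_inj; apply: tF Fij.
rewrite bigcup_mkord (mu_sum xpredT) lee_fin -/(prefix_sum m n) in aM.
have [k0 /andP[tc ta]] := truncn_div_bounds ca aM.
set k := Num.truncn _ in k0 tc ta.
have [g [gk gj]] := near_equal_grouping m_ge0 m_lt n k0.
pose piece j := \big[setU/set0]_(i < n | g i == j) F i.
exists (piece @` `I_k); split.
- split.
  + apply/seteqP; split=> [x [_ [j _ <-] /bigsetU_ordP[i _ Fx]]|x [i /= ilt Fx]].
      by exists i => //=.
    exists (piece (g i)); first by exists (g i) => //; apply: gk.
    by apply/bigsetU_ordP; exists (Ordinal ilt).
  + apply: trivIset_sets => j j' _ _ [x [/bigsetU_ordP[i /eqP <- Fx]]].
    by move=> /bigsetU_ordP[i' /eqP <- F'x]; rewrite (tF i i') //; exists x.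
  + move=> _ [j jk <-]; apply/set0P/negP => /eqP piece0.
    have /andP[lo _] := gj j jk.
    have s0 : \sum_(i < n | g i == j) m i = 0.
      apply: EFin_inj.
      by rewrite -(mu_sum (fun i => g i == j)) -/(piece j) piece0 measure0.
    by move: lo; rewrite s0; lra.
- by move=> _ [j _ <-]; apply: bigsetU_measurable => i _.
- move=> _ [j jk <-]; rewrite (mu_sum (fun i => g i == j)) !lte_fin.
  have /andP[lo hi] := gj j jk.
  by apply/andP; split; lra.
Qed.
End Equipartition.

Lemma partition_refine (T : Type) (C : set (set T)) (P : set T -> set (set T))
    (A : set T) :
  partition C id A -> (forall S, C S -> partition (P S) id S) ->
  partition (\bigcup_(S in C) P S) id A.
Proof.
move=> [covC trivC neC] PS; split.
- rewrite -covC; apply/seteqP; split=> [x [Q [S CS PSQ] Qx]|x [S CS Sx]].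
    have [covP _ _] := PS S CS.
    by exists S => //; rewrite -covP; exists Q.
  have [covP _ _] := PS S CS.
  by move: Sx; rewrite -covP => -[Q PSQ Qx]; exists Q => //; exists S.
- move=> Q Q' [S CS PSQ] [S' CS' PSQ'] QQ'.
  have [covP trivP _] := PS S CS; have [covP' _ _] := PS S' CS'.
  have SS' : S = S'.
    apply: trivC => //; case: QQ' => x [Qx Q'x]; exists x; split.
      by rewrite -covP; exists Q.
    by rewrite -covP'; exists Q'.
  by subst S'; apply: trivP.
- by move=> Q [S CS PSQ]; have [_ _] := PS S CS; apply.
Qed.

Lemma well_order_min (T : eqType) (R : rel T) (A : set T) :
  well_order R -> A !=set0 -> exists2 z, A z & forall y, A y -> R z y.
Proof.
move=> Rwo [x Ax]; have [|z [[Az zmin] _]] := Rwo [pred y | `[< A y >]].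
  by exists x; rewrite inE.
exists z => [|y Ay]; first by move: Az; rewrite inE.
by apply: zmin; rewrite inE.
Qed.

Lemma well_order_refl (T : eqType) (R : rel T) : well_order R -> reflexive R.
Proof.
move=> Rwo x; have [|_ -> xmin] := well_order_min (A := [set x]) Rwo.
  by exists x.
exact: xmin.
Qed.

Lemma well_order_anti (T : eqType) (R : rel T) : well_order R -> antisymmetric R.
Proof.
move=> Rwo x y; have := @wo_chain_antisymmetric T R predT.
by move=> /(_ _ x y isT isT); apply => A _; apply: Rwo.
Qed.

(** * Topological groups and Haar measure *)

Section TopologicalGroup.
Variables (G : ptopologicalType) (mul : G -> G -> G) (inv : G -> G) (e : G).
Hypothesis TG : is_topgroup mul inv e.

Lemma mulA : associative mul. Proof. by case: TG. Qed.
Lemma mul1g : left_id e mul. Proof. by case: TG. Qed.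
Lemma mulVg : left_inverse e inv mul. Proof. by case: TG. Qed.

Lemma mulKg x y : mul (inv x) (mul x y) = y.
Proof. by rewrite mulA mulVg mul1g. Qed.

Lemma mulgV x : mul x (inv x) = e.
Proof. by rewrite -{1}(mulKg (inv x) (mul x (inv x))) (mulKg x) mulVg. Qed.

Lemma mulg1 : right_id e mul.
Proof. by move=> x; rewrite -(mulVg x) mulA mulgV mul1g. Qed.

Lemma mulKVg x y : mul x (mul (inv x) y) = y.
Proof. by rewrite mulA mulgV mul1g. Qed.

Lemma invM x y : inv (mul x y) = mul (inv y) (inv x).
Proof.
have xyK : mul (mul x y) (mul (inv y) (inv x)) = e by rewrite -mulA mulKVg mulgV.
by rewrite -[LHS]mulg1 -xyK mulKg.
Qed.

Lemma mulVlmul l x y : mul (inv (mul l x)) (mul l y) = mul (inv x) y.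
Proof. by rewrite invM -mulA mulKg. Qed.

Lemma inv1 : inv e = e.
Proof. by rewrite -[LHS]mulg1 mulVg. Qed.

Lemma lmulE x A : lmul mul x A = mul (inv x) @^-1` A.
Proof.
apply/seteqP; split => [y [a Aa <-]|y Ay]; first by rewrite /= mulKg.
by exists (mul (inv x) y); rewrite ?mulKVg.
Qed.

Lemma lmul_id x A : A e -> lmul mul x A x.
Proof. by exists e; rewrite ?mulg1. Qed.

Lemma lmulS x A B : A `<=` B -> lmul mul x A `<=` lmul mul x B.
Proof. by move=> AB y [a Aa <-]; exists a => //; apply: AB. Qed.

Lemma continuous_mull x : continuous (mul x).
Proof.
move=> y A nA; case: TG => _ _ _ contM _.
have [/= [B1 B2] [nB1 nB2] sub] := contM (x, y) A nA.
apply: filterS nB2 => z B2z; exact: (sub (x, z) (conj (nbhs_singleton nB1) B2z)).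
Qed.

Lemma open_lmul x A : open A -> open (lmul mul x A).
Proof.
by move=> oA; rewrite lmulE; apply: open_comp => // y _; apply: continuous_mull.
Qed.

Lemma compact_lmul x K : compact K -> compact (lmul mul x K).
Proof.
move=> cK; apply: continuous_compact => //.
by apply/continuous_subspaceT/continuous_mull.
Qed.

Lemma compact_mul A B : compact A -> compact B ->
  compact [set mul p.1 p.2 | p in A `*` B].
Proof.
move=> cA cB; apply: continuous_compact; last exact: compact_setX.
by case: TG => _ _ _ contM _; apply: continuous_subspaceT.
Qed.

Lemma open_nbhs_quotient A : nbhs e A -> exists B, [/\ open B, B e &
  forall a b, B a -> B b -> A (mul a (inv b)) /\ A (mul (inv a) b)].
Proof.
move=> nA; case: TG => _ _ _ contM contV.
have [/= [B1 B2] [nB1 nB2] sub] : nbhs (e, e) [set p | A (mul p.1 p.2)].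
  by apply: contM; rewrite /= mul1g.
have ninv B : nbhs e B -> nbhs e (inv @^-1` B).
  by move=> nB; apply: contV; rewrite inv1.
have nC : nbhs e (B1 `&` inv @^-1` B2 `&` (inv @^-1` B1 `&` B2)).
  by apply: filterI; apply: filterI => //; apply: ninv.
exists (interior (B1 `&` inv @^-1` B2 `&` (inv @^-1` B1 `&` B2))); split.
- exact: open_interior.
- exact: nbhs_singleton (nbhs_interior nC).
- move=> a b /interior_subset [[a1 _] [a3 _]] /interior_subset [[_ b2] [_ b4]].
  by split; [apply: (sub (a, inv b)) | apply: (sub (inv a, b))].
Qed.

Lemma compact_cover_translates K N : compact K -> open N -> N e ->
  exists ys : seq G, forall x, K x -> exists2 y, y \in ys & lmul mul y N x.
Proof.
move=> cK oN Ne; have := cK; rewrite compact_cover => /(_ G K (lmul mul ^~ N)).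
case=> [y _|x Kx|D _ KD]; first exact: open_lmul.
  by exists x => //; apply: lmul_id.
by exists (finmap.enum_fset D) => x /KD [y Dy Nx]; exists y.
Qed.

End TopologicalGroup.

Definition borel_set (G : ptopologicalType) (A : set G) :=
  measurable (A : set (borelG G)).

Section HaarMeasure.
Variables (R : realType) (G : ptopologicalType).
Variables (mul : G -> G -> G) (inv : G -> G) (e : G).
Variable mu : {measure set (borelG G) -> \bar R}.
Hypotheses (TG : is_topgroup mul inv e) (LC : lc_sigma_compact G).
Hypothesis HA : left_haar mul mu.
Implicit Types (A B K V : set G).

Lemma open_borel A : open A -> borel_set A.
Proof. by move=> oA; apply: sub_sigma_algebra. Qed.

Lemma compact_borel K : compact K -> borel_set K.
Proof.
move=> /compact_closed cK; rewrite -[K]setCK; apply: measurableC.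
by apply: open_borel; rewrite openC; apply: cK; case: LC.
Qed.

Lemma haar_lmul x A : borel_set A -> mu (lmul mul x A) = mu A.
Proof. by case: HA => + _ _ _ _; apply. Qed.

Lemma haar_compact_lt K : compact K -> (mu K < +oo)%E.
Proof. by case: HA => _ + _ _ _; apply. Qed.

Lemma haar_le A B : borel_set A -> borel_set B -> A `<=` B -> (mu A <= mu B)%E.
Proof. by move=> mA mB AB; apply: le_measure; rewrite ?inE. Qed.

Lemma haar_compact_fin_num K : compact K -> mu K \is a fin_num.
Proof. by move=> cK; rewrite ge0_fin_numE ?haar_compact_lt. Qed.

(* Finitely many translates of an open neighbourhood of [e] cover a compact set
   of positive measure, so the neighbourhood cannot be null. *)
Lemma haar_open_gt0 V : open V -> V e -> (0 < mu V)%E.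
Proof.
move=> oV Ve; case: HA => _ _ _ inner [A [mA A0]].
have : (0 < mu setT)%E.
  by apply: lt_le_trans A0 _; apply: haar_le => //; apply: measurableT.
rewrite (inner setT openT) => /ereal_sup_gt[_ [K [cK _] <-] K0].
have [ys Kys] := compact_cover_translates TG cK oV Ve.
rewrite lt_def measure_ge0 andbT; apply/negP => /eqP V0.
have Kcov : K `<=` \bigcup_(y in [set` ys]) lmul mul y V.
  by move=> x /Kys [y ? ?]; exists y.
have := content_sub_fsum mu (finite_seq ys)
  (fun y _ => open_borel (open_lmul TG y oV)) (compact_borel cK) Kcov.
rewrite fsbig1 ?leNgt ?K0 // => y _.
by rewrite /= haar_lmul ?V0 //; apply: open_borel.
Qed.

Lemma haar_small_open_nbhs (d : R) : mu [set e] = 0%E -> 0 < d ->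
  exists N, [/\ open N, N e & (mu N < d%:E)%E].
Proof.
move=> mu_e d0; case: HA => _ _ outer _ _.
have : (mu [set e] < d%:E)%E by rewrite mu_e lte_fin.
rewrite outer; last by apply: compact_borel; exact: compact_set1.
by move=> /ereal_inf_lt[_ [N [oN eN] <-] Nd]; exists N; split => //; apply: eN.
Qed.

Lemma haar_decomposition E K N : borel_set E -> E `<=` K -> compact K ->
  open N -> N e -> exists (F : nat -> set G) (n : nat),
  [/\ forall i, borel_set (F i), trivIset setT F,
      forall i, (mu (F i) <= mu N)%E & E = \bigcup_(i < n) F i].
Proof.
move=> mE EK cK oN Ne; have [ys Kys] := compact_cover_translates TG cK oN Ne.
pose T i := E `&` lmul mul (nth e ys i) N.
have mT i : borel_set (T i).
  by apply: measurableI => //; exact: open_borel (open_lmul TG _ oN).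
exists (seqDU T), (size ys); split.
- exact: seqDU_measurable.
- exact: trivIset_seqDU.
- move=> i; rewrite -(haar_lmul (nth e ys i) (open_borel oN)).
  apply: haar_le; first exact: seqDU_measurable.
    exact: open_borel (open_lmul TG _ oN).
  by move=> x Tx; have [] := subset_seqDU Tx.
- rewrite bigcup_mkord -bigsetU_seqDU -bigcup_mkord.
  apply/seteqP; split => [x Ex|x [i _ [//]]].
  have [y ys_y Nx] := Kys x (EK x Ex).
  by exists (index y ys); rewrite /= ?index_mem // /T nth_index.
Qed.

End HaarMeasure.

(** * Voronoi cells of a maximal separated family *)

Section VoronoiCells.
Variables (G : ptopologicalType) (mul : G -> G -> G) (inv : G -> G) (e : G).
Hypothesis TG : is_topgroup mul inv e.
Variables (V W : set G).
Hypotheses (oV : open V) (Ve : V e) (oW : open W).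
Hypothesis VVW : forall a b, V a -> V b -> W (mul a (inv b)).

Lemma exists_maximal_separated : exists L : set G,
  trivIset L (lmul mul ^~ V) /\
  forall x, exists2 l, L l & lmul mul x V `&` lmul mul l V !=set0.
Proof.
have [L [_ trivL maxL]] := ex_maximal_disjoint_subcollection (lmul mul ^~ V) setT.
exists L; split => // x; apply: contrapT => noL.
have Lx : ~ L x.
  by move=> Lx; apply: noL; exists x => //; exists x; split; exact: (lmul_id TG).
apply: (maxL (x |` L)) => //.
  by split=> [y|xLL]; [right|apply: Lx; apply: xLL; left].
move=> l l' [->|Ll] [->|Ll'] //= ll'.
- by exfalso; apply: noL; exists l'.
- by exfalso; apply: noL; exists l => //; rewrite setIC.
- exact: trivL.
Qed.

Lemma V_sub_W : V `<=` W.
Proof. by move=> a Va; have := VVW Va Ve; rewrite (inv1 TG) (mulg1 TG). Qed.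

Section Cells.
Variables (L : set G) (R : rel G).
Hypotheses (trivL : trivIset L (lmul mul ^~ V)) (Rwo : well_order R).
Hypothesis maxL : forall x, exists2 l, L l & lmul mul x V `&` lmul mul l V !=set0.

(* A point outside [\bigcup_(l in L) l V] goes to the [R]-least [l] with
   [x \in l W]; excluding only the translates [l' W] of [R]-smaller [l'], an
   open set, keeps the cells Borel. *)
Definition cell l := lmul mul l V `|` (lmul mul l W `\`
  (\bigcup_(l' in L) lmul mul l' V `|`
   \bigcup_(l' in [set l' | L l' /\ ~~ R l l']) lmul mul l' W)).

Lemma cell_sub l : cell l `<=` lmul mul l W.
Proof. by move=> x [/(lmulS V_sub_W)|[]]. Qed.

Lemma cell_borel l : borel_set (cell l).
Proof.
have oU (D : set G) (A : set G) : open A -> open (\bigcup_(l' in D) lmul mul l' A).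
  move=> oA; apply: bigcup_open => l' _; exact (@open_lmul G mul inv e TG l' A oA).
apply: measurableU; first exact: open_borel (open_lmul TG _ oV).
apply: measurableD; first exact: open_borel (open_lmul TG _ oW).
by apply: open_borel; apply: openU; apply: oU.
Qed.

Lemma cell_cover : \bigcup_(l in L) cell l = setT.
Proof.
apply/seteqP; split=> // x _.
have [[l Ll Vx]|notV] := pselect ((\bigcup_(l in L) lmul mul l V) x).
  by exists l => //; left.
have [|z [Lz Wz] zmin] := well_order_min (A := [set l | L l /\ lmul mul l W x]) Rwo.
  have [l Ll [y [[a Va <-] [b Vb ab]]]] := maxL x.
  exists l; split => //; exists (mul b (inv a)); first exact: VVW.
  by rewrite (mulA TG) ab -(mulA TG) (mulgV TG) (mulg1 TG).
exists z => //; right; split => // -[//|[l' [Ll' zl'] Wl']].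
by move/negP: zl'; apply; apply: zmin.
Qed.

Lemma cell_sep l l' x : L l -> L l' -> ~~ R l l' -> cell l x -> cell l' x -> False.
Proof.
move=> Ll Ll' Rll' lx l'x; have /cell_sub W'x := l'x.
case: lx => [Vx|[_ notx]]; last by apply: notx; right; exists l'.
case: l'x => [V'x|[_ []]]; last by left; exists l.
have ll' : l = l' by apply: trivL => //; exists x.
by move: Rll'; rewrite ll' (well_order_refl Rwo).
Qed.

Lemma cell_trivIset : trivIset L cell.
Proof.
move=> l l' Ll Ll' [x [lx l'x]]; apply: contrapT => /eqP nll'.
have : ~~ R l l' || ~~ R l' l.
  by rewrite -negb_and; apply: contra nll' => /(well_order_anti Rwo) ->.
case/orP => nR; first exact: cell_sep Ll Ll' nR lx l'x.
exact: cell_sep Ll' Ll nR l'x lx.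
Qed.

End Cells.

Lemma exists_voronoi_partition : exists C : set (set G),
  partition C id setT /\ forall S, C S ->
  borel_set S /\ exists l, lmul mul l V `<=` S /\ S `<=` lmul mul l W.
Proof.
have [L [trivL maxL]] := exists_maximal_separated.
have [R Rwo] := well_ordering_principle G.
pose C := cell L R.
exists (C @` L); split.
- split.
  + by rewrite /cover bigcup_image; apply: cell_cover.
  + by apply: trivIset_sets; apply: cell_trivIset.
  + by move=> _ [l _ <-]; exists l; left; exact: (lmul_id TG).
- move=> _ [l _ <-]; split; first exact: cell_borel.
  by exists l; split=> [x|]; [left | apply: cell_sub].
Qed.

End VoronoiCells.

(** * Uniform point sets from partitions *)

Lemma eratio_le (R : realType) (b B x y : R) : 0 < b ->
  b <= x <= B -> b <= y <= B -> (eratio x%:E y%:E <= (B / b)%:E)%E.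
Proof.
move=> b0 /andP[bx xB] /andP[by_ yB]; have y0 : 0 < y := lt_le_trans b0 by_.
rewrite /eratio; case: eqP => _.
  by rewrite lee_fin ler_pdivlMr // mul1r (le_trans bx).
rewrite inver gt_eqF // -EFinM lee_fin.
by rewrite ler_pM ?invr_ge0 ?(ltW y0) ?(le_trans (ltW b0)) ?lef_pV2.
Qed.

Section Representatives.
Variables (R : realType) (G : ptopologicalType).
Variables (mul : G -> G -> G) (inv : G -> G) (e : G).
Variable mu : {measure set (borelG G) -> \bar R}.
Hypotheses (TG : is_topgroup mul inv e) (LC : lc_sigma_compact G).
Hypothesis HA : left_haar mul mu.
Variables (P : set (set G)) (W U K Q : set G) (b B : R).
Hypotheses (Ppart : partition P id setT) (Pborel : forall S, P S -> borel_set S).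
Hypotheses (b0 : 0 < b) (Pmu : forall S, P S -> (b%:E <= mu S <= B%:E)%E).
Hypothesis Psmall : forall S x y, P S -> S x -> S y -> W (mul (inv x) y).
Hypotheses (WU : W `<=` U) (WK : W `<=` K) (cK : compact K).
Hypothesis cQ : compact (closure Q).

Definition representatives := [set xget e S | S in P].

Definition block x := \bigcup_(S in [set S | P S /\ S x]) S.

Lemma representative_in S : P S -> S (xget e S).
Proof. by case: Ppart => _ _ neP /neP /xgetPex. Qed.

Lemma block_representative S : P S -> block (xget e S) = S.
Proof.
move=> PS; apply/seteqP; split=> [x [S' [PS' S'r] S'x]|x Sx]; last first.
  by exists S => //; split=> //; apply: representative_in.
case: Ppart => _ trivP _.
suff -> : S = S' by [].
by apply: trivP => //; exists (xget e S); split=> //; apply: representative_in.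
Qed.

Lemma sub_lmul_representative S : P S -> S `<=` lmul mul (xget e S) W.
Proof.
move=> PS x Sx; exists (mul (inv (xget e S)) x); last exact: (mulKVg TG).
exact: Psmall (representative_in PS) Sx.
Qed.

Lemma representatives_cover : disjoint_cover mul representatives U block.
Proof.
case: Ppart => covP trivP _; split.
- by move=> _ [S PS <-]; rewrite block_representative //; apply: Pborel.
- move=> _ [S PS <-]; rewrite block_representative //.
  by move=> x /(sub_lmul_representative PS); apply: lmulS.
- move=> _ _ [S PS <-] [S' PS' <-]; rewrite !block_representative // => SS'.
  by rewrite (trivP S S').
- apply/seteqP; split=> // x _; have : cover P id x by rewrite covP.
  case=> S PS Sx; exists (xget e S); first by exists S.
  by rewrite block_representative.
Qed.

Lemma representatives_separated : rel_separated mul Q representatives.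
Proof.
pose QK := [set mul p.1 p.2 | p in closure Q `*` K].
have cQK : compact QK := compact_mul TG cQ cK.
have [_ _ trivB _] := representatives_cover.
exists (Num.truncn (fine (mu QK) / b)) => x.
have xQK_borel : borel_set (lmul mul x QK).
  by apply: (compact_borel LC); apply: (compact_lmul TG).
have xQK_mu : (mu (lmul mul x QK) <= (fine (mu QK))%:E)%E.
  rewrite (haar_lmul HA _ (compact_borel LC cQK)) fineK //.
  exact (haar_compact_fin_num HA cQK).
apply: (@card_le_measure _ (borelG G) R mu G _ block (lmul mul x QK)) => //.
- by apply: sub_trivIset trivB => y [].
move=> _ [[S PS <-] [q Qq xq]]; rewrite block_representative //.
split; [exact: Pborel | by case/andP: (Pmu PS) |].
move=> y /(sub_lmul_representative PS) [w Ww <-]; rewrite -xq.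
exists (mul q w).
  by exists (q, w); split=> //=; [apply: subset_closure | apply: WK].
by rewrite (mulA TG).
Qed.

Lemma representatives_uniformity :
  (uniformity mul mu representatives U <= (B / b)%:E)%E.
Proof.
have fin S : P S -> mu S = (fine (mu S))%:E.
  move=> PS; have /andP[bS SB] := Pmu PS.
  by rewrite fineK // ge0_fin_numE // (le_lt_trans SB) ?ltry.
apply: le_trans (ereal_inf_lbound _) _.
  by exists block => //; exact: representatives_cover.
apply: ge_ereal_sup => _ [_ [S PS <-] [_ [S' PS' <-] <-]].
rewrite !block_representative // (fin S PS) (fin S' PS').
by apply: eratio_le => //; rewrite -!lee_fin -!fin //; apply: Pmu.
Qed.

End Representatives.

Lemma partition_uniformity (R : realType) (G : ptopologicalType)
    (mul : G -> G -> G) (inv : G -> G) (e : G)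
    (mu : {measure set (borelG G) -> \bar R}) (P : set (set G))
    (W U K Q : set G) (b B : R) :
  is_topgroup mul inv e -> lc_sigma_compact G -> left_haar mul mu ->
  partition P id setT -> (forall S, P S -> borel_set S) -> 0 < b ->
  (forall S, P S -> (b%:E <= mu S <= B%:E)%E) ->
  (forall S x y, P S -> S x -> S y -> W (mul (inv x) y)) ->
  W `<=` U -> W `<=` K -> compact K -> compact (closure Q) ->
  exists Lambda : set G, [/\ rel_separated mul Q Lambda, U_dense mul Lambda U &
    (uniformity mul mu Lambda U <= (B / b)%:E)%E].
Proof.
move=> TG LC HA Ppart Pborel b0 Pmu Psmall WU WK cK cQ.
exists (representatives e P); split.
- exact (representatives_separated TG LC HA Ppart Pborel b0 Pmu Psmall WU WK cK cQ).
- have [_ sub _ cov] := representatives_cover TG Ppart Pborel Psmall WU.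
  apply/seteqP; split=> // x _; move: (cov); rewrite -subTset => /(_ x I).
  by case=> l Ll /(sub l Ll); exists l.
- exact (representatives_uniformity TG Ppart Pborel b0 Pmu Psmall WU).
Qed.

Section HaarPartitions.
Variables (R : realType) (G : ptopologicalType).
Variables (mul : G -> G -> G) (inv : G -> G) (e : G).
Variable mu : {measure set (borelG G) -> \bar R}.
Hypotheses (TG : is_topgroup mul inv e) (LC : lc_sigma_compact G).
Hypothesis HA : left_haar mul mu.

Lemma haar_equipartition (S K N : set G) (a c r : R) :
  borel_set S -> S `<=` K -> compact K -> open N -> N e -> (mu N < r%:E)%E ->
  0 < c < a -> r <= c -> (a%:E <= mu S)%E ->
  exists P : set (set G), [/\ partition P id S, forall T, P T -> borel_set T &
    forall T, P T -> ((c - r)%:E < mu T < (c * a / (a - c) + r)%:E)%E].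
Proof.
move=> bS SK cK oN Ne Nr ca rc aS.
have [F [n [bF trivF FN SF]]] := haar_decomposition TG HA bS SK cK oN Ne.
rewrite SF in aS *.
exact (measure_equipartition bF trivF (fun i => le_lt_trans (FN i) Nr) ca rc aS).
Qed.

Lemma haar_atomic_partition : mu [set e] != 0%E -> exists c : R, 0 < c /\
  exists P : set (set G), [/\ partition P id setT, forall S, P S -> borel_set S,
    forall S, P S -> mu S = c%:E &
    forall S x y, P S -> S x -> S y -> [set e] (mul (inv x) y)].
Proof.
move=> mu_e; have cK : compact [set e] by apply: compact_set1.
have fin : mu [set e] \is a fin_num by exact (haar_compact_fin_num HA cK).
have set1E x : [set x] = lmul mul x [set e].
  apply/seteqP; split=> y; first by move=> ->; apply: (lmul_id TG).
  by case=> _ -> <-; rewrite (mulg1 TG).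
exists (fine (mu [set e])); split.
  by rewrite -lte_fin fineK // lt_def mu_e measure_ge0.
exists [set [set x] | x in setT]; split.
- split; first by apply/seteqP; split=> // x _; exists [set x] => //; exists x.
    by apply: trivIset_sets => x y _ _ [z [-> ->]].
  by move=> _ [x _ <-]; exists x.
- by move=> _ [x _ <-]; rewrite set1E; exact (compact_borel LC (compact_lmul TG cK)).
- move=> _ [x _ <-]; rewrite fineK // set1E haar_lmul //.
  exact (compact_borel LC cK).
- by move=> _ x y [z _ <-] -> ->; apply: (mulVg TG).
Qed.

Lemma haar_nonatomic_partition (W : set G) (eta : R) :
  mu [set e] = 0%E -> nbhs e W -> 0 < eta < 1 -> exists c : R, 0 < c /\
  exists P : set (set G), [/\ partition P id setT, forall S, P S -> borel_set S,
    forall S, P S ->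
      (((1 - eta) * c)%:E < mu S < (((1 - eta)^-1 + eta) * c)%:E)%E &
    forall S x y, P S -> S x -> S y -> W (mul (inv x) y)].
Proof.
move=> mu_e nW /andP[eta0 eta1].
have [K [cK nK]] : exists K, compact K /\ nbhs e K by case: LC => _ + _; apply.
have [W0 [oW0 W0e W0W]] := open_nbhs_quotient TG (filterI nW nK).
have W0K : W0 `<=` K.
  move=> w W0w; have [[_ Kw] _] := W0W w e W0w W0e.
  by rewrite (inv1 TG) (mulg1 TG) in Kw.
have [V [oV Ve VV]] := open_nbhs_quotient TG (open_nbhs_nbhs (conj oW0 W0e)).
have VVW0 u v : V u -> V v -> W0 (mul u (inv v)) by move=> Vu Vv; case: (VV u v Vu Vv).
have [C [Cpart Cprop]] := exists_voronoi_partition TG oV Ve oW0 VVW0.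
have muV_gt0 : (0 < mu V)%E := haar_open_gt0 TG LC HA oV Ve.
have muV_fin : mu V \is a fin_num.
  rewrite ge0_fin_numE // (le_lt_trans _ (haar_compact_lt HA cK)) //.
  apply: haar_le; [exact: open_borel | exact: compact_borel | ].
  by move=> v /(V_sub_W TG Ve VVW0) /W0K.
pose a := fine (mu V); pose c := eta * a; pose r := eta * c.
have a0 : 0 < a by rewrite -lte_fin fineK.
have ca : 0 < c < a by rewrite mulr_gt0 //= gtr_pMl.
have r0 : 0 < r by rewrite !mulr_gt0.
have rc : r <= c by rewrite ler_piMl ?ltW // mulr_gt0.
have [N [oN Ne Nr]] := haar_small_open_nbhs LC HA mu_e r0.
have /choice[PS PSprop] : forall S, exists P, C S -> [/\ partition P id S,
    forall T, P T -> borel_set T &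
    forall T, P T -> ((c - r)%:E < mu T < (c * a / (a - c) + r)%:E)%E].
  move=> S; have [CS|] := pselect (C S); last by exists set0.
  have [bS [l [lVS SlW0]]] := Cprop S CS.
  have SlK : S `<=` lmul mul l K by move=> x /SlW0; apply: lmulS.
  have aS : (a%:E <= mu S)%E.
    rewrite /a fineK // -(haar_lmul HA l (open_borel oV)).
    by apply: haar_le => //; exact: open_borel (open_lmul TG l oV).
  have [P Pprop] := haar_equipartition bS SlK (compact_lmul TG cK) oN Ne Nr ca rc aS.
  by exists P.
exists c; split; first by case/andP: ca.
exists (\bigcup_(S in C) PS S); split.
- by apply: partition_refine Cpart _ => S /PSprop[].
- by move=> T [S /PSprop[_ + _]]; apply.
- move=> T [S CS PST]; have [_ _ /(_ T PST)] := PSprop S CS.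
  have -> : c - r = (1 - eta) * c by rewrite /r; ring.
  suff -> : c * a / (a - c) + r = ((1 - eta)^-1 + eta) * c by [].
  rewrite /r /c; field.
  by rewrite !subr_eq0 !gt_eqF //; case/andP: ca.
move=> T x y [S CS PST] Tx Ty.
have [[covP _ _] _ _] := PSprop S CS; have [_ [l [_ SlW0]]] := Cprop S CS.
have TS : T `<=` S by rewrite -covP => z Tz; exists T.
have [w1 W0w1 <-] := SlW0 x (TS x Tx); have [w2 W0w2 <-] := SlW0 y (TS y Ty).
by rewrite (mulVlmul TG); have [_ [] //] := W0W w1 w2 W0w1 W0w2.
Qed.
End HaarPartitions.

Theorem lemma5p4 (R : realType) (G : ptopologicalType)
    (mul : G -> G -> G) (inv : G -> G) (e : G)
    (mu : {measure set (borelG G) -> \bar R}) (Q U : set G) (eps : R) :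
  is_topgroup mul inv e -> lc_sigma_compact G -> left_haar mul mu ->
  good_Q inv e Q -> nbhs e U -> 0 < eps ->
  exists Lambda : set G,
    [/\ rel_separated mul Q Lambda, U_dense mul Lambda U &
        (uniformity mul mu Lambda U < (1 + eps)%:E)%E].
Proof.
move=> TG LC HA [_ _ _ cQ] nU eps0.
have [mu_e|mu_e] := eqVneq (mu [set e]) 0%E; last first.
  have [c [c0 [P [Ppart Pborel Pmu Psmall]]]] := haar_atomic_partition TG LC HA mu_e.
  have eU : [set e] `<=` U by move=> _ ->; apply: nbhs_singleton.
  have cE : compact [set e] by apply: compact_set1.
  have Pmu' S : P S -> (c%:E <= mu S <= c%:E)%E by move=> /Pmu ->; rewrite lexx.
  have [L [Lsep Ldense Lunif]] := partition_uniformity TG LC HA Ppart Pborel c0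
    Pmu' Psmall eU (@subset_refl _ _) cE cQ.
  exists L; split=> //; apply: le_lt_trans Lunif _.
  by rewrite divff ?gt_eqF // lte_fin ltrDl.
have [K [cK nK]] : exists K : set G, compact K /\ nbhs e K by case: LC => _ + _; apply.
have [eta eta01 ratio_lt] := exists_equipartition_ratio eps0.
have [c [c0 [P [Ppart Pborel Pmu Psmall]]]] :=
  haar_nonatomic_partition TG LC HA mu_e (filterI nU nK) eta01.
have Pmu' S : P S ->
    ((((1 - eta) * c)%:E <= mu S <= (((1 - eta)^-1 + eta) * c)%:E))%E.
  by move=> /Pmu /andP[lo hi]; rewrite !ltW.
have b0 : 0 < (1 - eta) * c by rewrite mulr_gt0 // subr_gt0; case/andP: eta01.
have [L [Lsep Ldense Lunif]] := partition_uniformity TG LC HA Ppart Pborel b0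
  Pmu' Psmall (fun x => @proj1 _ _) (fun x => @proj2 _ _) cK cQ.
exists L; split=> //; apply: le_lt_trans Lunif _.
by rewrite lte_fin ratio_lt.
Qed.
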